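(* Let $\lambda_0\in(0,1/2)$ and let $\nu$ be uniformly distributed on $[0,\pi]$, $n_1=\cos\nu$, $n_2=\sin\nu$. Then $$E\left[|n_1|\,n_2^2\arctan\left(\frac{4\lambda_0|n_1|}{4\lambda_0^2-1}\right)\right]=-\frac{\lambda_0}2-\frac23\lambda_0^3.$$
   Context: $\arctan$ denotes the principal branch with values in $(-\pi/2,\pi/2)$. *)

From Stdlib Require Import Reals.
From Coquelicot Require Import Coquelicot.
Open Scope R_scope.

Definition uniform_expect (a b : R) (f : R -> R) : R :=
  / (b - a) * RInt f a b.

From Stdlib Require Import Reals Lra Psatz.
From Coquelicot Require Import Coquelicot.
Open Scope R_scope.

(* Since atan is odd, the integrand equals cos x sin^2 x atan (k cos x) with
   k = 4 l / (4 l^2 - 1).  Integrating by parts against (sin^3 / 3)' turns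
   the integral over [0, PI] into (k/3) times the integral of
   sin^4 x / (1 + k^2 cos^2 x), which splits into cos^2 x, a constant and
   1 / (1 + k^2 cos^2 x); the last one integrates to PI / sqrt (1 + k^2),
   a primitive being the continuous argument of the ellipse point
   (sqrt (1 + k^2) cos x, sin x).  For our k, sqrt (1 + k^2) is rational in l
   and everything collapses to -l/2 - 2 l^3 / 3. *)

Lemma Rabs_mul_atan_Rabs (a c : R) : Rabs c * atan (a * Rabs c) = c * atan (a * c).
Proof.
  destruct (Rle_or_lt 0 c) as [hc | hc].
  - now rewrite Rabs_right by lra.
  - rewrite Rabs_left by lra.
    replace (a * - c) with (- (a * c)) by ring.
    rewrite atan_opp; ring.
Qed.

Lemma is_RInt_primitive (F f : R -> R) (a b : R) :
  (forall x, is_derive F x (f x)) -> (forall x, continuous f x) ->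
  is_RInt f a b (F b - F a).
Proof.
  intros hF hf.
  exact (is_RInt_derive F f a b (fun x _ => hF x) (fun x _ => hf x)).
Qed.

Lemma sin_pow2 (x : R) : sin x ^ 2 = 1 - cos x ^ 2.
Proof. rewrite <- !Rsqr_pow2; apply sin2. Qed.

(* The continuous determination of the argument of (s cos x, sin x): the
   correction term is atan of tan (x - arg), and it vanishes where sin x = 0. *)
Definition arg_ellipse (s x : R) : R :=
  x - atan ((s - 1) * sin x * cos x / (s * cos x ^ 2 + sin x ^ 2)).

Lemma arg_ellipse_sin0 (s x : R) : sin x = 0 -> arg_ellipse s x = x.
Proof.
  intros hx; unfold arg_ellipse; rewrite hx.
  replace ((s - 1) * 0 * cos x / (s * cos x ^ 2 + 0 ^ 2)) with 0
    by (unfold Rdiv; ring).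
  rewrite atan_0; ring.
Qed.

Lemma is_derive_arg_ellipse (s x : R) : 0 < s ->
  is_derive (arg_ellipse s) x (s / (s ^ 2 * cos x ^ 2 + sin x ^ 2)).
Proof.
  intros hs; unfold arg_ellipse.
  pose proof (sin_pow2 x) as hsin.
  pose proof (pow2_ge_0 (cos x)) as hc.
  assert (hden : 0 < s * cos x ^ 2 + sin x ^ 2).
  { destruct (Req_dec (cos x) 0) as [e | e].
    - rewrite e in hsin |- *; nra.
    - pose proof (pow2_gt_0 _ e); nra. }
  auto_derive; [lra |].
  set (S := sin x) in *; set (C := cos x) in *.
  field_simplify; try nra.
  replace (S ^ 4) with ((S ^ 2) ^ 2) by ring; rewrite hsin.
  field; nra.
Qed.

Lemma is_RInt_cos2 : is_RInt (fun x => cos x ^ 2) 0 PI (PI / 2).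
Proof.
  replace (PI / 2) with ((PI / 2 + sin PI * cos PI / 2) - (0 / 2 + sin 0 * cos 0 / 2))
    by (rewrite sin_PI, sin_0; field).
  apply (is_RInt_primitive (fun x => x / 2 + sin x * cos x / 2)).
  - intros x; auto_derive; auto.
    pose proof (sin_pow2 x); nra.
  - intros x; apply (@ex_derive_continuous R_AbsRing R_NormedModule); auto_derive; auto.
Qed.

Lemma is_RInt_inv_1_plus_cos2 (k : R) :
  is_RInt (fun x => / (1 + k ^ 2 * cos x ^ 2)) 0 PI (PI / sqrt (1 + k ^ 2)).
Proof.
  set (s := sqrt (1 + k ^ 2)).
  pose proof (pow2_ge_0 k) as hk.
  assert (hs : 0 < s) by (apply sqrt_lt_R0; lra).
  assert (hs2 : s ^ 2 = 1 + k ^ 2) by (apply pow2_sqrt; lra).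
  replace (PI / s) with (/ s * arg_ellipse s PI - / s * arg_ellipse s 0)
    by (rewrite !arg_ellipse_sin0 by (apply sin_PI || apply sin_0); field; lra).
  apply (is_RInt_primitive (fun x => / s * arg_ellipse s x)).
  - intros x.
    pose proof (pow2_ge_0 (cos x)).
    replace (/ (1 + k ^ 2 * cos x ^ 2))
      with (/ s * (s / (s ^ 2 * cos x ^ 2 + sin x ^ 2))).
    + apply is_derive_scal, is_derive_arg_ellipse, hs.
    + rewrite hs2, (sin_pow2 x); field; nra.
  - intros x; apply (@ex_derive_continuous R_AbsRing R_NormedModule).
    pose proof (pow2_ge_0 (cos x)).
    auto_derive; nra.
Qed.

Lemma RInt_cos_sin2_atan_by_parts (k : R) :
  RInt (fun x => cos x * sin x ^ 2 * atan (k * cos x)) 0 PI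
  = k / 3 * RInt (fun x => sin x ^ 4 / (1 + k ^ 2 * cos x ^ 2)) 0 PI :> R.
Proof.
  set (f := fun x => cos x * sin x ^ 2 * atan (k * cos x)).
  set (g := fun x => sin x ^ 4 / (1 + k ^ 2 * cos x ^ 2)).
  assert (hg_cont : forall x, continuous g x).
  { intros x; apply (@ex_derive_continuous R_AbsRing R_NormedModule).
    pose proof (pow2_ge_0 (cos x)); pose proof (pow2_ge_0 k).
    unfold g; auto_derive; nra. }
  assert (hg : is_RInt g 0 PI (RInt g 0 PI))
    by (apply (RInt_correct (V := R_CompleteNormedModule)), ex_RInt_continuous; auto).
  assert (hfg : is_RInt (fun x => f x - k / 3 * g x) 0 PI
                 (sin PI ^ 3 / 3 * atan (k * cos PI) - sin 0 ^ 3 / 3 * atan (k * cos 0))).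
  { apply (is_RInt_primitive (fun x => sin x ^ 3 / 3 * atan (k * cos x))).
    - intros x; unfold f, g; auto_derive; [auto |].
      pose proof (pow2_ge_0 (cos x)); pose proof (pow2_ge_0 k).
      field; nra.
    - intros x; apply (@ex_derive_continuous R_AbsRing R_NormedModule).
      pose proof (pow2_ge_0 (cos x)); pose proof (pow2_ge_0 k).
      unfold f, g; auto_derive; nra. }
  rewrite sin_PI, sin_0 in hfg.
  pose proof (is_RInt_plus _ _ _ _ _ _ hfg (is_RInt_scal _ _ _ (k / 3) _ hg)) as hf.
  apply (is_RInt_ext _ f) in hf.
  - rewrite (is_RInt_unique _ _ _ _ hf); cbn; field.
  - intros x _; cbn; ring.
Qed.

Lemma is_RInt_sin4_div_1_plus_cos2 (k : R) : k <> 0 ->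
  is_RInt (fun x => sin x ^ 4 / (1 + k ^ 2 * cos x ^ 2)) 0 PI
    (PI / (2 * k ^ 2) - (2 * k ^ 2 + 1) * PI / k ^ 4
     + (1 + k ^ 2) ^ 2 / k ^ 4 * (PI / sqrt (1 + k ^ 2))).
Proof.
  intros hk.
  pose proof (pow2_gt_0 k hk) as hk2.
  pose proof (is_RInt_plus _ _ _ _ _ _
    (is_RInt_minus _ _ _ _ _ _
       (is_RInt_scal _ _ _ (/ k ^ 2) _ is_RInt_cos2)
       (is_RInt_const 0 PI ((2 * k ^ 2 + 1) / k ^ 4)))
    (is_RInt_scal _ _ _ ((1 + k ^ 2) ^ 2 / k ^ 4) _ (is_RInt_inv_1_plus_cos2 k))) as h.
  eapply is_RInt_ext in h.
  - cbn -[pow] in h; unfold minus, plus, opp in h; cbn -[pow] in h.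
    replace (PI / (2 * k ^ 2) - (2 * k ^ 2 + 1) * PI / k ^ 4) with
      (/ k ^ 2 * (PI / 2) + - ((PI - 0) * ((2 * k ^ 2 + 1) / k ^ 4))) by (field; lra).
    exact h.
  - (* polynomial division of (1 - c^2)^2 by 1 + k^2 c^2 *)
    intros x _; cbn -[pow]; unfold minus, plus, opp; cbn -[pow].
    pose proof (pow2_ge_0 (cos x)).
    replace (sin x ^ 4) with ((sin x ^ 2) ^ 2) by ring; rewrite sin_pow2.
    field; nra.
Qed.

Lemma RInt_cos_sin2_atan (k : R) : k <> 0 ->
  RInt (fun x => cos x * sin x ^ 2 * atan (k * cos x)) 0 PI
  = k * PI / 3 * (/ (2 * k ^ 2) + (sqrt (1 + k ^ 2) ^ 3 - 2 * k ^ 2 - 1) / k ^ 4) :> R.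
Proof.
  intros hk.
  rewrite RInt_cos_sin2_atan_by_parts,
    (is_RInt_unique _ _ _ _ (is_RInt_sin4_div_1_plus_cos2 k hk)).
  pose proof (pow2_gt_0 k hk).
  assert (hs : 0 < sqrt (1 + k ^ 2)) by (apply sqrt_lt_R0; lra).
  replace ((1 + k ^ 2) ^ 2) with (sqrt (1 + k ^ 2) ^ 2 * sqrt (1 + k ^ 2) ^ 2)
    by (rewrite pow2_sqrt by lra; ring).
  field; lra.
Qed.

Theorem lemma9 (lambda0 : R) (h0 : 0 < lambda0) (h1 : lambda0 < 1/2) :
  uniform_expect 0 PI
    (fun nu => Rabs (cos nu) * (sin nu) ^ 2 *
       atan (4 * lambda0 * Rabs (cos nu) / (4 * lambda0 ^ 2 - 1)))
  = - lambda0 / 2 - 2 / 3 * lambda0 ^ 3.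
Proof.
  set (l := lambda0) in *.
  set (k := 4 * l / (4 * l ^ 2 - 1)).
  assert (hk : k <> 0)
    by (apply Rmult_integral_contrapositive_currified; [lra | apply Rinv_neq_0_compat; nra]).
  assert (hs : sqrt (1 + k ^ 2) = (1 + 4 * l ^ 2) / (1 - 4 * l ^ 2)).
  { replace (1 + k ^ 2) with (((1 + 4 * l ^ 2) / (1 - 4 * l ^ 2)) ^ 2)
      by (unfold k; field; nra).
    apply sqrt_pow2, Rlt_le, Rdiv_lt_0_compat; nra. }
  unfold uniform_expect.
  rewrite (RInt_ext _ (fun x => cos x * sin x ^ 2 * atan (k * cos x))).
  - rewrite RInt_cos_sin2_atan, hs by exact hk.
    pose proof PI_RGT_0; unfold k; field; repeat split; nra.
  - intros x _.
    replace (4 * l * Rabs (cos x) / (4 * l ^ 2 - 1)) with (k * Rabs (cos x))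
      by (unfold k, Rdiv; ring).
    rewrite (Rmult_comm (Rabs (cos x))), (Rmult_comm (cos x)), !Rmult_assoc.
    now rewrite Rabs_mul_atan_Rabs.
Qed.
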